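(* Let $(X,T)$ be a minimal Cantor system with a sequence of CKR partitions satisfying (KR1)–(KR6), and let $\lambda=\exp(2i\pi\alpha)$ with $\alpha\in\mathbb R$. Then $\lambda$ is a continuous eigenvalue of $(X,T)$ if and only if $(\lambda^{r_n(x)})_{n\ge1}$ converges uniformly in $x\in X$ (equivalently, $(\alpha r_n(x))_{n\ge1}$ converges modulo $\mathbb Z$ uniformly in $x$).
   Context: CKR partitions $\mathcal P(n)=\{T^{-j}B_k(n):1\le k\le C(n),0\le j<h_k(n)\}$ (partitions of $X$, $B_k(n)$ clopen) with $\mathcal P(0)$ trivial, roof $B(n)=\bigcup_kB_k(n)$. (KR1) $B(n+1)\subseteq B(n)$; (KR2) $\mathcal P(n+1)$ refines $\mathcal P(n)$; (KR3) $\bigcap_nB(n)$ is a single point; (KR4) the partitions generate the topology; (KR5) for all $n\ge1$, $k\le C(n-1)$, $l\le C(n)$ some $0\le j<h_l(n)$ has $T^{-j}B_l(n)\subseteq B_k(n-1)$; (KR6) $B(n)\subseteq B_1(n-1)$ for $n\ge1$. $r_n(x)=\min\{j\ge0:T^jx\in B(n)\}$. A continuous eigenvalue is $\lambda$ with $f\circ T=\lambda f$ for some continuous nonzero $f:X\to\mathbb C$. *)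

From Stdlib Require Import Reals Lra Lia ZArith List ClassicalEpsilon.
Open Scope R_scope.

Set Implicit Arguments.

Section Topo.
Variable X : Type.
Variable opn : (X -> Prop) -> Prop.

Definition is_topology : Prop :=
  opn (fun _ => True) /\ opn (fun _ => False) /\
  (forall U V, opn U -> opn V -> opn (fun x => U x /\ V x)) /\
  (forall F : (X -> Prop) -> Prop, (forall U, F U -> opn U) ->
     opn (fun x => exists U, F U /\ U x)).

Definition closed (A : X -> Prop) : Prop := opn (fun x => ~ A x).
Definition clopen (A : X -> Prop) : Prop := opn A /\ closed A.

Definition compact_space : Prop :=
  forall F : (X -> Prop) -> Prop, (forall U, F U -> opn U) ->
    (forall x, exists U, F U /\ U x) ->
    exists l : list (X -> Prop), (forall U, In U l -> F U) /\
      (forall x, exists U, In U l /\ U x).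

Definition hausdorff : Prop :=
  forall x y, x <> y -> exists U V, opn U /\ opn V /\ U x /\ V y /\
    (forall z, U z -> V z -> False).

Definition second_countable : Prop :=
  exists b : nat -> (X -> Prop), (forall i, opn (b i)) /\
    (forall U x, opn U -> U x -> exists i, b i x /\ (forall y, b i y -> U y)).

Definition connected_subset (S : X -> Prop) : Prop :=
  forall U V, opn U -> opn V -> (forall x, S x -> U x \/ V x) ->
    (forall x, S x -> U x -> V x -> False) ->
    (forall x, S x -> U x) \/ (forall x, S x -> V x).

Definition totally_disconnected : Prop :=
  forall S, connected_subset S -> forall x y, S x -> S y -> x = y.

Definition no_isolated_point : Prop :=
  forall U x, opn U -> U x -> exists y, U y /\ y <> x.

(* A Cantor space: nonempty, compact, metrizable (for compact Hausdorff spaces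
   equivalent to second countable), totally disconnected, without isolated points. *)
Definition cantor_space : Prop :=
  is_topology /\ (exists x : X, True) /\ compact_space /\ hausdorff /\
  second_countable /\ totally_disconnected /\ no_isolated_point.

Definition continuous (f : X -> X) : Prop :=
  forall U, opn U -> opn (fun x => U (f x)).

Definition homeomorphism (T : X -> X) : Prop :=
  exists Tinv : X -> X, (forall x, Tinv (T x) = x) /\ (forall x, T (Tinv x) = x) /\
    continuous T /\ continuous Tinv.

Definition minimal (T : X -> X) : Prop :=
  forall Y : X -> Prop, closed Y -> (forall x, Y (T x) <-> Y x) ->
    (exists x, Y x) -> forall x, Y x.

Definition minimal_cantor_system (T : X -> X) : Prop :=
  cantor_space /\ homeomorphism T /\ minimal T.

End Topo.

Definition C := (R * R)%type.
Definition Cmult (z w : C) : C :=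
  (fst z * fst w - snd z * snd w, fst z * snd w + snd z * fst w).
Definition Cminus (z w : C) : C := (fst z - fst w, snd z - snd w).
Definition Cnorm (z : C) : R := sqrt (fst z * fst z + snd z * snd z).
Definition C0 : C := (0, 0).
Definition C1 : C := (1, 0).
Fixpoint Cpow (z : C) (n : nat) : C :=
  match n with O => C1 | S m => Cmult z (Cpow z m) end.
Definition expi2pi (alpha : R) : C := (cos (2 * PI * alpha), sin (2 * PI * alpha)).

Definition continuous_C (X : Type) (opn : (X -> Prop) -> Prop) (f : X -> C) : Prop :=
  forall x eps, 0 < eps -> exists U, opn U /\ U x /\
    forall y, U y -> Cnorm (Cminus (f y) (f x)) < eps.

Definition continuous_eigenvalue (X : Type) (opn : (X -> Prop) -> Prop)
    (T : X -> X) (lam : C) : Prop :=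
  exists f : X -> C, continuous_C opn f /\ (exists x, f x <> C0) /\
    forall x, f (T x) = Cmult lam (f x).

(* Data: C n = C(n), h n k = h_k(n), B n k = B_k(n), with 1 <= k <= C n.
   The atom T^{-j} B_k(n) is {x | T^j x \in B_k(n)}. *)
Definition atom (X : Type) (T : X -> X) (B : nat -> nat -> X -> Prop)
    (n k j : nat) : X -> Prop := fun x => B n k (Nat.iter j T x).

Definition roof (X : Type) (Cn : nat -> nat) (B : nat -> nat -> X -> Prop) (n : nat)
    : X -> Prop := fun x => exists k, (1 <= k <= Cn n)%nat /\ B n k x.

Definition is_KR_partition (X : Type) (opn : (X -> Prop) -> Prop) (T : X -> X)
    (Cn : nat -> nat) (h : nat -> nat -> nat) (B : nat -> nat -> X -> Prop) (n : nat) : Prop :=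
  (forall k, (1 <= k <= Cn n)%nat -> clopen opn (B n k) /\ (exists x, B n k x) /\
      (1 <= h n k)%nat) /\
  (forall x, exists k j, (1 <= k <= Cn n)%nat /\ (j < h n k)%nat /\ atom T B n k j x) /\
  (forall x k j k' j', (1 <= k <= Cn n)%nat -> (j < h n k)%nat ->
     (1 <= k' <= Cn n)%nat -> (j' < h n k')%nat ->
     atom T B n k j x -> atom T B n k' j' x -> k = k' /\ j = j').

Definition CKR_partitions (X : Type) (opn : (X -> Prop) -> Prop) (T : X -> X)
    (Cn : nat -> nat) (h : nat -> nat -> nat) (B : nat -> nat -> X -> Prop) : Prop :=
  (forall n, is_KR_partition opn T Cn h B n) /\
  (Cn 0%nat = 1%nat /\ h 0%nat 1%nat = 1%nat /\ forall x, B 0%nat 1%nat x) /\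
  (forall n x, roof Cn B (S n) x -> roof Cn B n x) /\
  (forall n k j, (1 <= k <= Cn (S n))%nat -> (j < h (S n) k)%nat ->
     exists k' j', (1 <= k' <= Cn n)%nat /\ (j' < h n k')%nat /\
       forall x, atom T B (S n) k j x -> atom T B n k' j' x) /\
  (exists x0, forall y, (forall n, roof Cn B n y) <-> y = x0) /\
  (forall U x, opn U -> U x -> exists n k j, (1 <= k <= Cn n)%nat /\ (j < h n k)%nat /\
     atom T B n k j x /\ forall y, atom T B n k j y -> U y) /\
  (forall n k l, (1 <= n)%nat -> (1 <= k <= Cn (n - 1))%nat -> (1 <= l <= Cn n)%nat ->
     exists j, (j < h n l)%nat /\ forall x, atom T B n l j x -> B (n - 1)%nat k x) /\
  (forall n x, (1 <= n)%nat -> roof Cn B n x -> B (n - 1)%nat 1%nat x).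

(* r_n(x) = min { j >= 0 : T^j x \in B(n) }  (well defined under minimality) *)
Definition first_entry (X : Type) (T : X -> X) (A : X -> Prop) (x : X) (j : nat) : Prop :=
  A (Nat.iter j T x) /\ forall i, (i < j)%nat -> ~ A (Nat.iter i T x).

Definition return_time (X : Type) (T : X -> X) (Cn : nat -> nat)
    (B : nat -> nat -> X -> Prop) (n : nat) (x : X) : nat :=
  epsilon (inhabits 0%nat) (first_entry T (roof Cn B n) x).

Definition unif_conv_C (X : Type) (u : nat -> X -> C) : Prop :=
  exists g : X -> C, forall eps, 0 < eps -> exists N, forall n x, (1 <= n)%nat -> (N <= n)%nat ->
    Cnorm (Cminus (u n x) (g x)) < eps.

Definition unif_conv_modZ (X : Type) (u : nat -> X -> R) : Prop :=
  exists g : X -> R, forall eps, 0 < eps -> exists N, forall n x, (1 <= n)%nat -> (N <= n)%nat ->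
    exists m : Z, Rabs (u n x - g x - IZR m) < eps.

From Stdlib Require Import Reals Lra Lia ZArith List Classical ClassicalEpsilon
  FunctionalExtensionality PropExtensionality.
From Coquelicot Require Complex.
Open Scope R_scope.

(* Write r_n for the return time to the roof B(n) and x0 for the point of (KR3).
   - If f is a continuous eigenfunction for lam, then |f| is constant (minimality)
     and f (T^(r_n x) x) = lam^(r_n x) f x; since T^(r_n x) x lies in B(n), and the
     closed sets B(n) shrink to x0 (compactness), lam^(r_n x) converges uniformly
     to f x0 / f x.
   - Conversely, each lam^(r_n) is constant on the open atoms of P(n), so a uniform
     limit G is continuous; off x0 we have r_n x = 1 + r_n (T x) for large n, hence
     G x = lam G (T x), and conj G is an eigenfunction for lam off x0, hence
     everywhere since X has no isolated point.
   - Finally, for lam = exp(2 i pi alpha) uniform convergence of lam^(r_n) is the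
     same as uniform convergence of alpha r_n modulo Z. *)

(** * The complex plane *)

(* The norm used in the statement is Coquelicot's modulus; this gives access to
   its library (triangle inequality, multiplicativity, ...). *)
Lemma Cnorm_Cmod (z : C) : Cnorm z = Complex.Cmod z.
Proof. unfold Cnorm, Complex.Cmod. f_equal. ring. Qed.

Lemma Cnorm_nonneg (z : C) : 0 <= Cnorm z.
Proof. apply sqrt_pos. Qed.

Lemma Cnorm_pos (z : C) : z <> C0 -> 0 < Cnorm z.
Proof. intros Hz. rewrite Cnorm_Cmod. apply Complex.Cmod_gt_0. exact Hz. Qed.

Lemma Cnorm_mult (z w : C) : Cnorm (Cmult z w) = Cnorm z * Cnorm w.
Proof. rewrite !Cnorm_Cmod. apply Complex.Cmod_mult. Qed.

Lemma Cnorm_Cpow (z : C) (n : nat) : Cnorm (Cpow z n) = Cnorm z ^ n.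
Proof.
  induction n as [|n IH]; simpl.
  - rewrite Cnorm_Cmod. apply Complex.Cmod_1.
  - rewrite Cnorm_mult, IH. reflexivity.
Qed.

Lemma Cnorm_triangle (a b c : C) :
  Cnorm (Cminus a c) <= Cnorm (Cminus a b) + Cnorm (Cminus b c).
Proof.
  rewrite !Cnorm_Cmod.
  replace (Cminus a c) with (Complex.Cplus (Cminus a b) (Cminus b c))
    by (unfold Cminus, Complex.Cplus; simpl; f_equal; ring).
  apply Complex.Cmod_triangle.
Qed.

Lemma Cnorm_sym (a b : C) : Cnorm (Cminus a b) = Cnorm (Cminus b a).
Proof. unfold Cnorm, Cminus; simpl. f_equal. ring. Qed.

Lemma Cnorm_minus0 (z : C) : Cnorm (Cminus z C0) = Cnorm z.
Proof. unfold Cnorm, Cminus, C0; simpl. f_equal. ring. Qed.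

Lemma Cnorm_C0 : Cnorm C0 = 0.
Proof. unfold Cnorm, C0; simpl. rewrite Rmult_0_l, Rplus_0_l. apply sqrt_0. Qed.

Lemma C_eq_of_close (a b : C) :
  (forall eps, 0 < eps -> Cnorm (Cminus a b) < eps) -> a = b.
Proof.
  intros Hclose.
  assert (Hzero : Cnorm (Cminus a b) = 0).
  { destruct (Rle_lt_or_eq_dec _ _ (Cnorm_nonneg (Cminus a b))) as [Hlt|Heq]; auto.
    specialize (Hclose _ Hlt). lra. }
  rewrite Cnorm_Cmod in Hzero. apply Complex.Cmod_eq_0 in Hzero.
  destruct a as [a1 a2], b as [b1 b2]. unfold Cminus, Complex.RtoC in Hzero.
  simpl in Hzero. injection Hzero as E1 E2. f_equal; lra.
Qed.

Lemma Cmult_assoc (a b c : C) : Cmult a (Cmult b c) = Cmult (Cmult a b) c.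
Proof. unfold Cmult; simpl. f_equal; ring. Qed.

Lemma Cmult_minus_distr (a b c : C) : Cminus (Cmult a b) (Cmult a c) = Cmult a (Cminus b c).
Proof. unfold Cmult, Cminus; simpl. f_equal; ring. Qed.

Lemma Cmult_minus_factor (w z z0 : C) : z <> C0 ->
  Cminus (Cmult w z) z0 = Cmult z (Cminus w (Complex.Cdiv z0 z)).
Proof.
  intros Hz. pose proof (Cnorm_pos z Hz) as Hpos.
  destruct w as [w1 w2], z as [a b], z0 as [p q]. unfold Cnorm in Hpos; simpl in Hpos.
  assert (Hsq : a * a + b * b <> 0) by (intros E; rewrite E, sqrt_0 in Hpos; lra).
  unfold Cminus, Cmult, Complex.Cdiv, Complex.Cmult, Complex.Cinv; simpl. f_equal; field; auto.
Qed.

Lemma Cnorm_conj_minus (a b : C) :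
  Cnorm (Cminus (Complex.Cconj a) (Complex.Cconj b)) = Cnorm (Cminus a b).
Proof. unfold Cnorm, Cminus, Complex.Cconj; simpl. f_equal. ring. Qed.

Lemma Cconj_unit_mult (lam w : C) : Cnorm lam = 1 ->
  Complex.Cconj w = Cmult lam (Complex.Cconj (Cmult lam w)).
Proof.
  intros Hlam.
  assert (H1 : fst lam * fst lam + snd lam * snd lam = 1).
  { unfold Cnorm in Hlam. rewrite <- (sqrt_sqrt (fst lam * fst lam + snd lam * snd lam)).
    - rewrite Hlam. ring.
    - nra. }
  destruct lam as [c s], w as [p q]. unfold Complex.Cconj, Cmult; simpl in *.
  f_equal.
  - replace p with (p * (c * c + s * s)) at 1 by (rewrite H1; ring). ring.
  - replace q with (q * (c * c + s * s)) at 1 by (rewrite H1; ring). ring.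
Qed.

(** * The exponential e(a) = exp(2 i pi a) and convergence modulo Z *)

Lemma Cnorm_expi (a : R) : Cnorm (expi2pi a) = 1.
Proof.
  unfold Cnorm, expi2pi; simpl. pose proof (sin2_cos2 (2 * PI * a)) as H. unfold Rsqr in H.
  rewrite <- sqrt_1. f_equal. lra.
Qed.

Lemma Cpow_expi (a : R) (m : nat) : Cpow (expi2pi a) m = expi2pi (a * INR m).
Proof.
  induction m as [|m IH].
  - simpl. unfold expi2pi, C1. rewrite !Rmult_0_r, cos_0, sin_0. reflexivity.
  - simpl Cpow. rewrite IH, S_INR. unfold expi2pi, Cmult; simpl.
    replace (2 * PI * (a * (INR m + 1))) with (2 * PI * a + 2 * PI * (a * INR m)) by ring.
    rewrite cos_plus, sin_plus. f_equal; ring.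
Qed.

Lemma cos_Zperiod (x : R) (m : Z) : cos (x + 2 * IZR m * PI) = cos x.
Proof.
  destruct (Z_le_gt_dec 0 m) as [Hm|Hm].
  - rewrite <- (Z2Nat.id m Hm), <- INR_IZR_INZ. apply cos_period.
  - replace m with (- Z.of_nat (Z.to_nat (- m)))%Z by lia.
    rewrite opp_IZR, <- INR_IZR_INZ.
    rewrite <- (cos_period (x + 2 * - INR (Z.to_nat (- m)) * PI) (Z.to_nat (- m))).
    f_equal. ring.
Qed.

Lemma sin_abs_le (x : R) : Rabs (sin x) <= Rabs x.
Proof.
  assert (Hpos : forall y, 0 < y -> Rabs (sin y) <= y).
  { intros y Hy. pose proof (sin_lt_x y Hy). pose proof PI2_1.
    destruct (Rle_dec 1 y).
    - pose proof (SIN_bound y). apply Rabs_le. lra.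
    - assert (0 <= sin y) by (apply sin_ge_0; lra). rewrite Rabs_right; lra. }
  destruct (Rtotal_order x 0) as [H|[H|H]].
  - rewrite <- (Ropp_involutive x), sin_neg, Rabs_Ropp, Rabs_Ropp, (Rabs_right (- x)) by lra.
    apply Hpos. lra.
  - subst. rewrite sin_0. lra.
  - rewrite (Rabs_right x) by lra. auto.
Qed.

Lemma expi2pi_chord (a b : R) (m : Z) :
  Cnorm (Cminus (expi2pi a) (expi2pi b)) = 2 * Rabs (sin (PI * (a - b - IZR m))).
Proof.
  unfold Cnorm, Cminus, expi2pi; simpl.
  set (u := 2 * PI * a). set (v := 2 * PI * b). set (d := PI * (a - b - IZR m)).
  assert (Hsq : (cos u - cos v) * (cos u - cos v) + (sin u - sin v) * (sin u - sin v)
                = 2 - 2 * cos (u - v)).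
  { rewrite cos_minus. pose proof (sin2_cos2 u). pose proof (sin2_cos2 v). unfold Rsqr in *.
    lra. }
  assert (Hper : cos (u - v) = cos (2 * d)).
  { rewrite <- (cos_Zperiod (2 * d) m). f_equal. unfold u, v, d. ring. }
  rewrite Hsq, Hper, cos_2a_sin.
  replace (2 - 2 * (1 - 2 * sin d * sin d)) with (Rsqr (2 * sin d)) by (unfold Rsqr; ring).
  rewrite sqrt_Rsqr_abs, Rabs_mult, (Rabs_right 2) by lra. reflexivity.
Qed.

Lemma expi2pi_close_modZ (eps : R) : 0 < eps -> exists kappa, 0 < kappa /\ forall a b,
  Cnorm (Cminus (expi2pi a) (expi2pi b)) < kappa -> exists m : Z, Rabs (a - b - IZR m) < eps.
Proof.
  intros Heps. pose proof PI_RGT_0. pose proof PI2_1.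
  set (e := Rmin eps (1 / 2)).
  assert (He : 0 < e <= 1 / 2 /\ e <= eps).
  { unfold e. split; [split|]; [apply Rmin_glb_lt; lra | apply Rmin_r | apply Rmin_l]. }
  assert (Hsin_e : 0 < sin (PI * e)) by (apply sin_gt_0; nra).
  assert (Hmono : forall y, e <= y <= 1 / 2 -> sin (PI * e) <= sin (PI * y))
    by (intros y Hy; apply sin_incr_1; nra).
  exists (2 * sin (PI * e)). split; [lra|].
  intros a b Hab.
  (* the nearest integer m to a - b *)
  set (m := Int_part (a - b + 1 / 2)).
  destruct (base_Int_part (a - b + 1 / 2)) as [I1 I2]. fold m in I1, I2.
  exists m. rewrite (expi2pi_chord _ _ m) in Hab.
  set (d := a - b - IZR m) in *.
  assert (Hd : -1 / 2 <= d < 1 / 2) by (unfold d; lra).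
  destruct He as [[He0 He1] He2].
  destruct (Rlt_dec (Rabs d) e) as [Hl|Hl]; [lra|]. exfalso.
  destruct (Rle_dec 0 d).
  - rewrite Rabs_right in Hl by lra.
    pose proof (Hmono d ltac:(lra)). pose proof (Rle_abs (sin (PI * d))). lra.
  - rewrite Rabs_left in Hl by lra.
    pose proof (Hmono (- d) ltac:(lra)) as M.
    replace (PI * - d) with (- (PI * d)) in M by ring. rewrite sin_neg in M.
    pose proof (Rle_abs (- sin (PI * d))) as A. rewrite Rabs_Ropp in A. lra.
Qed.

Lemma expi2pi_surj (w : C) : Cnorm w = 1 -> exists t, expi2pi t = w.
Proof.
  intros Hw.
  assert (Hsq : fst w * fst w + snd w * snd w = 1).
  { unfold Cnorm in Hw. rewrite <- sqrt_1 in Hw. apply sqrt_inj in Hw; nra. }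
  destruct w as [a b]; simpl in Hsq. pose proof PI_RGT_0.
  assert (Ha : -1 <= a <= 1) by nra.
  pose proof (cos_acos a Ha) as Hcos. pose proof (sin_acos a Ha) as Hsin.
  replace (1 - a²) with (Rsqr b) in Hsin by (unfold Rsqr; lra).
  rewrite sqrt_Rsqr_abs in Hsin.
  destruct (Rle_dec 0 b).
  - exists (acos a / (2 * PI)). unfold expi2pi.
    replace (2 * PI * (acos a / (2 * PI))) with (acos a) by (field; lra).
    rewrite Hcos, Hsin, Rabs_right by lra. reflexivity.
  - exists (- acos a / (2 * PI)). unfold expi2pi.
    replace (2 * PI * (- acos a / (2 * PI))) with (- acos a) by (field; lra).
    rewrite cos_neg, sin_neg, Hcos, Hsin, Rabs_left by lra. f_equal. ring.
Qed.

Definition unif_limit_C {X : Type} (u : nat -> X -> C) (g : X -> C) : Prop :=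
  forall eps, 0 < eps -> exists N, forall n x, (1 <= n)%nat -> (N <= n)%nat ->
    Cnorm (Cminus (u n x) (g x)) < eps.

Lemma unif_limit_unit_norm {X : Type} (u : nat -> X -> C) (g : X -> C) :
  (forall n x, Cnorm (u n x) = 1) -> unif_limit_C u g -> forall x, Cnorm (g x) = 1.
Proof.
  intros Hu Hlim x.
  destruct (Req_dec (Cnorm (g x)) 1) as [E|Hne]; auto. exfalso.
  set (gap := Rabs (Cnorm (g x) - 1)).
  assert (Hgap : 0 < gap) by (apply Rabs_pos_lt; lra).
  destruct (Hlim gap Hgap) as [N HN].
  specialize (HN (Nat.max N 1) x ltac:(lia) ltac:(lia)).
  pose proof (Cnorm_triangle (u (Nat.max N 1) x) (g x) C0) as T1.
  pose proof (Cnorm_triangle (g x) (u (Nat.max N 1) x) C0) as T2.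
  rewrite !Cnorm_minus0, Hu in *. rewrite Cnorm_sym in T2.
  unfold gap in *. destruct (Rle_dec 0 (Cnorm (g x) - 1)).
  - rewrite Rabs_right in HN by lra. lra.
  - rewrite Rabs_left in HN by lra. lra.
Qed.

Lemma modZ_iff_C {X : Type} (v : nat -> X -> R) :
  unif_conv_modZ v <-> unif_conv_C (fun n x => expi2pi (v n x)).
Proof.
  pose proof PI_RGT_0. split.
  - intros [g Hg]. exists (fun x => expi2pi (g x)). intros eps Heps.
    destruct (Hg (eps / (2 * PI))) as [N HN]; [apply Rdiv_lt_0_compat; lra|].
    exists N. intros n x Hn HNn. destruct (HN n x Hn HNn) as [m Hm].
    rewrite (expi2pi_chord _ _ m).
    pose proof (sin_abs_le (PI * (v n x - g x - IZR m))) as Hsin.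
    rewrite Rabs_mult, (Rabs_right PI) in Hsin by lra.
    assert (PI * Rabs (v n x - g x - IZR m) < PI * (eps / (2 * PI)))
      by (apply Rmult_lt_compat_l; lra).
    replace (PI * (eps / (2 * PI))) with (eps / 2) in * by (field; lra). lra.
  - intros [G HG].
    assert (Hunit : forall x, Cnorm (G x) = 1)
      by (apply (unif_limit_unit_norm _ _ (fun n x => Cnorm_expi (v n x)) HG)).
    exists (fun x => epsilon (inhabits 0) (fun t => expi2pi t = G x)).
    intros eps Heps. destruct (expi2pi_close_modZ eps Heps) as [kappa [Hk Hclose]].
    destruct (HG kappa Hk) as [N HN]. exists N. intros n x Hn HNn.
    apply Hclose.
    rewrite (epsilon_spec (inhabits 0) (fun t => expi2pi t = G x)); [apply HN; auto|].
    apply expi2pi_surj, Hunit.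
Qed.

(** * General topology *)

Lemma opn_ext {X : Type} {opn : (X -> Prop) -> Prop} (U V : X -> Prop) :
  (forall x, U x <-> V x) -> opn U -> opn V.
Proof.
  intros HUV HU. replace V with U; auto.
  apply functional_extensionality. intros x. apply propositional_extensionality. auto.
Qed.

Lemma closed_finite_union {X : Type} (opn : (X -> Prop) -> Prop) (P : nat -> X -> Prop)
    (m : nat) :
  is_topology opn -> (forall k, (1 <= k <= m)%nat -> closed opn (P k)) ->
  closed opn (fun x => exists k, (1 <= k <= m)%nat /\ P k x).
Proof.
  intros [Htrue [_ [Hinter _]]] HP. unfold closed. induction m as [|m IH].
  - apply (opn_ext (fun _ => True)); auto. intros x; split; auto. intros _ [k [Hk _]]; lia.
  - apply (opn_ext (fun x => ~ (exists k, (1 <= k <= m)%nat /\ P k x) /\ ~ P (S m) x)).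
    + intros x; split.
      * intros [Hlow Hlast] [k [Hk HPk]].
        destruct (Nat.eq_dec k (S m)) as [->|Hne]; [auto|].
        apply Hlow. exists k. split; [lia|auto].
      * intros Hnone. split.
        -- intros [k [Hk HPk]]. apply Hnone. exists k. split; [lia|auto].
        -- intros HPm. apply Hnone. exists (S m). split; [lia|auto].
    + apply Hinter; [apply IH; intros k Hk; apply HP; lia | apply (HP (S m)); lia].
Qed.

Lemma preimage_iter_open {X : Type} (opn : (X -> Prop) -> Prop) (T : X -> X) (j : nat) :
  continuous opn T -> forall U, opn U -> opn (fun x => U (Nat.iter j T x)).
Proof.
  intros HT. induction j as [|j IH]; intros U HU; simpl; auto.
  apply (IH (fun y => U (T y))). apply HT; auto.
Qed.

Lemma list_index_bound {A : Type} (P : A -> nat -> Prop) (l : list A) :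
  (forall a, In a l -> exists n, P a n) ->
  exists N, forall a, In a l -> exists n, (n <= N)%nat /\ P a n.
Proof.
  induction l as [|a l IH]; intros Hl.
  - exists 0%nat. intros b [].
  - destruct (Hl a (or_introl eq_refl)) as [na Hna].
    destruct IH as [N HN]; [intros b Hb; apply Hl; right; auto|].
    exists (Nat.max na N). intros b [<-|Hb].
    + exists na. split; [lia|auto].
    + destruct (HN b Hb) as [nb [Hnb HPb]]. exists nb. split; [lia|auto].
Qed.

Lemma compact_decreasing_closed_inside {X : Type} (opn : (X -> Prop) -> Prop)
    (A : nat -> X -> Prop) (V : X -> Prop) :
  compact_space opn -> (forall n, closed opn (A n)) -> (forall n x, A (S n) x -> A n x) ->
  opn V -> (forall x, (forall n, A n x) -> V x) ->
  exists N, forall n x, (N <= n)%nat -> A n x -> V x.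
Proof.
  intros Hcomp Hcl Hdec HV Hcap.
  assert (Hmono : forall m n x, (m <= n)%nat -> A n x -> A m x)
    by (intros m n x Hmn; induction Hmn; auto).
  set (cover := fun U n => U = V \/ U = (fun x => ~ A n x)).
  destruct (Hcomp (fun U => exists n, cover U n)) as [l [Hl Hlcov]].
  - intros U [n [-> | ->]]; [exact HV | apply Hcl].
  - intros x. destruct (classic (forall n, A n x)) as [Hall|Hnot].
    + exists V. split; [exists 0%nat; left; auto | auto].
    + apply not_all_ex_not in Hnot. destruct Hnot as [n Hn].
      exists (fun x => ~ A n x). split; [exists n; right; auto | auto].
  - destruct (list_index_bound cover l Hl) as [N HN].
    exists N. intros n x HNn Hx. destruct (Hlcov x) as [U [HUl Ux]].
    destruct (HN U HUl) as [m [Hm [-> | ->]]]; [auto|].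
    exfalso. apply Ux. apply (Hmono m n); [lia | auto].
Qed.

Lemma locally_constant_continuous {X : Type} (opn : (X -> Prop) -> Prop) (f : X -> C) :
  (forall x, exists U, opn U /\ U x /\ forall y, U y -> f y = f x) -> continuous_C opn f.
Proof.
  intros Hloc x eps Heps. destruct (Hloc x) as [U [HU [Ux HUf]]].
  exists U. repeat split; auto. intros y Uy. rewrite HUf by auto.
  unfold Cnorm, Cminus; simpl. rewrite !Rminus_diag, Rmult_0_l, Rplus_0_l, sqrt_0.
  exact Heps.
Qed.

Lemma unif_limit_continuous {X : Type} (opn : (X -> Prop) -> Prop) (u : nat -> X -> C)
    (g : X -> C) :
  (forall n, continuous_C opn (u n)) -> unif_limit_C u g -> continuous_C opn g.
Proof.
  intros Hu Hlim x eps Heps.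
  destruct (Hlim (eps / 3)) as [N HN]; [lra|].
  set (n := Nat.max N 1).
  destruct (Hu n x (eps / 3)) as [U [HU [Ux HUe]]]; [lra|].
  exists U. repeat split; auto. intros y Uy.
  pose proof (HN n x ltac:(lia) ltac:(lia)) as Hx.
  pose proof (HN n y ltac:(lia) ltac:(lia)) as Hy.
  pose proof (HUe y Uy) as Hn.
  pose proof (Cnorm_triangle (g y) (u n y) (g x)) as T1.
  pose proof (Cnorm_triangle (u n y) (u n x) (g x)) as T2.
  rewrite (Cnorm_sym (g y) (u n y)) in T1. lra.
Qed.

Lemma continuous_C_comp {X : Type} (opn : (X -> Prop) -> Prop) (f : X -> C) (T : X -> X) :
  continuous opn T -> continuous_C opn f -> continuous_C opn (fun x => f (T x)).
Proof.
  intros HT Hf x eps Heps. destruct (Hf (T x) eps Heps) as [U [HU [Ux HUe]]].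
  exists (fun y => U (T y)). repeat split; auto.
Qed.

Lemma continuous_C_scale {X : Type} (opn : (X -> Prop) -> Prop) (f : X -> C) (lam : C) :
  continuous_C opn f -> continuous_C opn (fun x => Cmult lam (f x)).
Proof.
  intros Hf x eps Heps. pose proof (Cnorm_nonneg lam).
  destruct (Hf x (eps / (Cnorm lam + 1))) as [U [HU [Ux HUe]]];
    [apply Rdiv_lt_0_compat; lra|].
  exists U. repeat split; auto. intros y Uy.
  rewrite Cmult_minus_distr, Cnorm_mult.
  specialize (HUe y Uy). pose proof (Cnorm_nonneg (Cminus (f y) (f x))).
  assert (Cnorm lam * Cnorm (Cminus (f y) (f x)) <= Cnorm lam * (eps / (Cnorm lam + 1)))
    by (apply Rmult_le_compat_l; lra).
  assert (Cnorm lam * (eps / (Cnorm lam + 1)) < eps).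
  { apply (Rmult_lt_reg_r (Cnorm lam + 1)); [lra|].
    replace (Cnorm lam * (eps / (Cnorm lam + 1)) * (Cnorm lam + 1)) with (Cnorm lam * eps)
      by (field; lra). nra. }
  lra.
Qed.

Lemma continuous_C_conj {X : Type} (opn : (X -> Prop) -> Prop) (f : X -> C) :
  continuous_C opn f -> continuous_C opn (fun x => Complex.Cconj (f x)).
Proof.
  intros Hf x eps Heps. destruct (Hf x eps Heps) as [U [HU [Ux HUe]]].
  exists U. repeat split; auto. intros y Uy. rewrite Cnorm_conj_minus. auto.
Qed.

Lemma continuous_eq_off_point {X : Type} (opn : (X -> Prop) -> Prop) (phi psi : X -> C)
    (x0 : X) :
  is_topology opn -> no_isolated_point opn -> continuous_C opn phi -> continuous_C opn psi ->
  (forall y, y <> x0 -> phi y = psi y) -> phi x0 = psi x0.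
Proof.
  intros [_ [_ [Hinter _]]] Hnip Hphi Hpsi Hoff. apply C_eq_of_close. intros eps Heps.
  destruct (Hphi x0 (eps / 2)) as [U1 [HU1 [U1x HU1e]]]; [lra|].
  destruct (Hpsi x0 (eps / 2)) as [U2 [HU2 [U2x HU2e]]]; [lra|].
  destruct (Hnip (fun y => U1 y /\ U2 y) x0 (Hinter _ _ HU1 HU2) (conj U1x U2x))
    as [y [[Hy1 Hy2] Hy]].
  specialize (HU1e y Hy1). specialize (HU2e y Hy2). rewrite (Hoff y Hy) in HU1e.
  pose proof (Cnorm_triangle (phi x0) (psi y) (psi x0)) as Htri.
  rewrite Cnorm_sym in HU1e. lra.
Qed.

Lemma norm_level_set_closed {X : Type} (opn : (X -> Prop) -> Prop) (f : X -> C) (c : R) :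
  is_topology opn -> continuous_C opn f -> closed opn (fun x => Cnorm (f x) = c).
Proof.
  intros [_ [_ [_ Hunion]]] Hf. unfold closed.
  apply (opn_ext (fun x => exists U, (opn U /\ forall y, U y -> Cnorm (f y) <> c) /\ U x)).
  - intros x; split.
    + intros [U [[_ HU] Ux]]. apply HU; auto.
    + intros Hx. set (d := Rabs (Cnorm (f x) - c)).
      assert (Hd : 0 < d) by (apply Rabs_pos_lt; lra).
      destruct (Hf x d Hd) as [U [HU [Ux HUd]]].
      exists U. repeat split; auto. intros y Uy Hy.
      specialize (HUd y Uy).
      pose proof (Cnorm_triangle (f x) (f y) C0) as T1.
      pose proof (Cnorm_triangle (f y) (f x) C0) as T2.
      rewrite !Cnorm_minus0 in T1, T2. rewrite Cnorm_sym in T1. unfold d in *.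
      destruct (Rle_dec 0 (Cnorm (f x) - c)).
      * rewrite Rabs_right in HUd by lra. lra.
      * rewrite Rabs_left in HUd by lra. lra.
  - apply Hunion. intros U [HU _]; auto.
Qed.

Lemma eigenfunction_norm_constant {X : Type} (opn : (X -> Prop) -> Prop) (T : X -> X)
    (f : X -> C) (lam : C) :
  is_topology opn -> minimal opn T -> continuous_C opn f -> Cnorm lam = 1 ->
  (forall x, f (T x) = Cmult lam (f x)) -> forall x y, Cnorm (f x) = Cnorm (f y).
Proof.
  intros Htop Hmin Hf Hlam Heig x y.
  apply (Hmin (fun x => Cnorm (f x) = Cnorm (f y))).
  - apply norm_level_set_closed; auto.
  - intros z. rewrite Heig, Cnorm_mult, Hlam, Rmult_1_l. tauto.
  - exists y. reflexivity.
Qed.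

Lemma eigenfunction_iter {X : Type} (T : X -> X) (f : X -> C) (lam : C) :
  (forall x, f (T x) = Cmult lam (f x)) ->
  forall j x, f (Nat.iter j T x) = Cmult (Cpow lam j) (f x).
Proof.
  intros Heig. induction j as [|j IH]; intros x; simpl.
  - destruct (f x) as [a b]. unfold Cmult, C1; simpl. f_equal; ring.
  - rewrite Heig, IH. apply Cmult_assoc.
Qed.

Lemma iter_succ_r {X : Type} (f : X -> X) (j : nat) (x : X) :
  Nat.iter j f (f x) = f (Nat.iter j f x).
Proof. induction j; simpl; congruence. Qed.

Lemma iter_add {X : Type} (f : X -> X) (a b : nat) (x : X) :
  Nat.iter (a + b) f x = Nat.iter a f (Nat.iter b f x).
Proof. induction a; simpl; congruence. Qed.

Lemma first_entry_unique {X : Type} (T : X -> X) (A : X -> Prop) (x : X) (j1 j2 : nat) :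
  first_entry T A x j1 -> first_entry T A x j2 -> j1 = j2.
Proof.
  intros [H1 H1'] [H2 H2'].
  destruct (lt_eq_lt_dec j1 j2) as [[L|E]|L]; auto.
  - exfalso. exact (H2' _ L H1).
  - exfalso. exact (H1' _ L H2).
Qed.

Lemma first_entry_exists {X : Type} (T : X -> X) (A : X -> Prop) (x : X) (j : nat) :
  A (Nat.iter j T x) -> exists j', first_entry T A x j'.
Proof.
  revert x. induction j as [j IH] using lt_wf_ind. intros x Hj.
  destruct (classic (exists i, (i < j)%nat /\ A (Nat.iter i T x))) as [[i [Hi HA]]|Hn].
  - exact (IH i Hi x HA).
  - exists j. split; auto. intros i Hi HA. apply Hn. eauto.
Qed.

(** * Return times to the roofs of CKR partitions *)

Section ReturnTimes.
Context {X : Type} {opn : (X -> Prop) -> Prop} {T : X -> X} {Cn : nat -> nat}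
  {h : nat -> nat -> nat} {B : nat -> nat -> X -> Prop}.
Hypothesis HKR : CKR_partitions opn T Cn h B.

Local Notation r := (return_time T Cn B).

(* r_n x is the first entry time of x into B(n): every orbit meets B(n), since
   the atoms T^(-j) B_k(n) cover X. *)
Lemma return_time_spec (n : nat) (x : X) : first_entry T (roof Cn B n) x (r n x).
Proof.
  destruct HKR as [HP _]. destruct (HP n) as [_ [Hcov _]].
  destruct (Hcov x) as [k [j [Hk [Hj Ha]]]].
  unfold return_time. apply epsilon_spec.
  apply (first_entry_exists T (roof Cn B n) x j). exists k; auto.
Qed.

Lemma return_time_atom (n k j : nat) (x : X) :
  (1 <= k <= Cn n)%nat -> (j < h n k)%nat -> atom T B n k j x -> r n x = j.
Proof.
  intros Hk Hj Ha.
  apply (first_entry_unique T (roof Cn B n) x); [apply return_time_spec|].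
  destruct HKR as [HP _]. destruct (HP n) as [Hcl [_ Hdisj]].
  split; [exists k; auto|].
  intros i Hi [k' [Hk' HB]].
  destruct (Hcl k' Hk') as [_ [_ Hh]].
  assert (Hsplit : Nat.iter j T x = Nat.iter (j - i) T (Nat.iter i T x))
    by (rewrite <- iter_add; f_equal; lia).
  assert (A1 : atom T B n k (j - i) (Nat.iter i T x))
    by (unfold atom in *; rewrite <- Hsplit; auto).
  assert (A2 : atom T B n k' 0 (Nat.iter i T x)) by (unfold atom; simpl; auto).
  destruct (Hdisj _ k (j - i)%nat k' 0%nat Hk ltac:(lia) Hk' ltac:(lia) A1 A2). lia.
Qed.

Lemma return_time_off_roof (n : nat) (x : X) :
  ~ roof Cn B n x -> r n x = S (r n (T x)).
Proof.
  intros Hx.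
  apply (first_entry_unique T (roof Cn B n) x); [apply return_time_spec|].
  destruct (return_time_spec n (T x)) as [Hin Hbefore].
  split.
  - simpl. rewrite <- iter_succ_r. auto.
  - intros [|i] Hi; simpl; auto.
    rewrite <- iter_succ_r. apply Hbefore. lia.
Qed.

Lemma roof_antitone (m n : nat) (x : X) : (m <= n)%nat -> roof Cn B n x -> roof Cn B m x.
Proof.
  intros Hmn. destruct HKR as [_ [_ [KR1 _]]]. induction Hmn; auto.
Qed.

(* r_n is constant on the open atoms of P(n). *)
Lemma return_time_locally_constant (n : nat) (x : X) :
  continuous opn T -> exists U, opn U /\ U x /\ forall y, U y -> r n y = r n x.
Proof.
  intros HT. destruct HKR as [HP _]. destruct (HP n) as [Hclopen [Hcov _]].
  destruct (Hcov x) as [k [j [Hk [Hj Ha]]]].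
  exists (atom T B n k j). repeat split; auto.
  - unfold atom. apply preimage_iter_open; auto. apply Hclopen; auto.
  - intros y Hy. rewrite (return_time_atom n k j x), (return_time_atom n k j y); auto.
Qed.

Lemma roofs_shrink (x0 : X) (V : X -> Prop) :
  is_topology opn -> compact_space opn -> (forall y, (forall n, roof Cn B n y) -> y = x0) ->
  opn V -> V x0 -> exists N, forall n y, (N <= n)%nat -> roof Cn B n y -> V y.
Proof.
  intros Htop Hcomp Hx0 HV Vx0.
  apply (compact_decreasing_closed_inside opn (roof Cn B)); auto.
  - intros n. destruct HKR as [HP _]. destruct (HP n) as [Hclopen _].
    apply closed_finite_union; auto. intros k Hk. apply Hclopen; auto.
  - intros n y. apply roof_antitone. lia.
  - intros y Hy. rewrite (Hx0 y Hy). exact Vx0.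
Qed.

(* A uniform limit G of lam^(r_n) satisfies G x = lam G (T x) off the roofs'
   intersection, because there r_n x = 1 + r_n (T x) for large n. *)
Lemma return_limit_shift (lam : C) (G : X -> C) (x : X) :
  Cnorm lam = 1 -> unif_limit_C (fun n x => Cpow lam (r n x)) G ->
  ~ (forall n, roof Cn B n x) -> G x = Cmult lam (G (T x)).
Proof.
  intros Hlam Hlim Hx. apply not_all_ex_not in Hx. destruct Hx as [n1 Hn1].
  apply C_eq_of_close. intros eps Heps.
  destruct (Hlim (eps / 2)) as [N HN]; [lra|].
  set (n := Nat.max (Nat.max N 1) n1).
  assert (Hoff : ~ roof Cn B n x)
    by (intros Hr; apply Hn1; apply (roof_antitone n1 n); [lia | auto]).
  pose proof (HN n x ltac:(lia) ltac:(lia)) as Hx.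
  pose proof (HN n (T x) ltac:(lia) ltac:(lia)) as HTx. simpl in Hx, HTx.
  rewrite (return_time_off_roof n x Hoff) in Hx. simpl Cpow in Hx.
  pose proof (Cnorm_triangle (G x) (Cmult lam (Cpow lam (r n (T x)))) (Cmult lam (G (T x))))
    as Htri.
  rewrite Cmult_minus_distr, Cnorm_mult, Hlam, Rmult_1_l in Htri.
  rewrite Cnorm_sym in Hx. lra.
Qed.

End ReturnTimes.

(* Eigenfunction => uniform convergence: lam^(r_n x) tends to f x0 / f x. *)
Lemma eigenvalue_return_times_converge {X : Type} (opn : (X -> Prop) -> Prop) (T : X -> X)
    (Cn : nat -> nat) (h : nat -> nat -> nat) (B : nat -> nat -> X -> Prop) (lam : C) :
  minimal_cantor_system opn T -> CKR_partitions opn T Cn h B -> Cnorm lam = 1 ->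
  continuous_eigenvalue opn T lam ->
  unif_conv_C (fun n x => Cpow lam (return_time T Cn B n x)).
Proof.
  intros [[Htop [_ [Hcomp _]]] [_ Hmin]] HKR Hlam [f [Hf [[x1 Hx1] Heig]]].
  pose proof (eigenfunction_norm_constant opn T f lam Htop Hmin Hf Hlam Heig) as Hconst.
  set (c := Cnorm (f x1)).
  assert (Hc : 0 < c) by (apply Cnorm_pos; auto).
  assert (Hnz : forall x, f x <> C0)
    by (intros x Hx; pose proof (Hconst x x1) as E; rewrite Hx, Cnorm_C0 in E; fold c in E;
        lra).
  pose proof HKR as (_ & _ & _ & _ & [x0 Hx0] & _).
  exists (fun x => Complex.Cdiv (f x0) (f x)). intros eps Heps.
  destruct (Hf x0 (eps * c)) as [U [HU [Ux0 HUe]]]; [nra|].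
  destruct (roofs_shrink HKR x0 U Htop Hcomp (fun y Hy => proj1 (Hx0 y) Hy) HU Ux0)
    as [N HN].
  exists N. intros n x _ HNn.
  (* T^(r_n x) x lies in B(n), hence near x0 *)
  destruct (return_time_spec HKR n x) as [Hroof _].
  specialize (HUe _ (HN n _ HNn Hroof)).
  rewrite (eigenfunction_iter T f lam Heig), (Cmult_minus_factor _ _ _ (Hnz x)), Cnorm_mult,
    (Hconst x x1) in HUe.
  fold c in HUe. nra.
Qed.

(* Uniform convergence => eigenfunction: conj of the limit is an eigenfunction. *)
Lemma return_times_converge_eigenvalue {X : Type} (opn : (X -> Prop) -> Prop) (T : X -> X)
    (Cn : nat -> nat) (h : nat -> nat -> nat) (B : nat -> nat -> X -> Prop) (lam : C) :
  minimal_cantor_system opn T -> CKR_partitions opn T Cn h B -> Cnorm lam = 1 ->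
  unif_conv_C (fun n x => Cpow lam (return_time T Cn B n x)) ->
  continuous_eigenvalue opn T lam.
Proof.
  intros [[Htop [[xa _] [_ [_ [_ [_ Hnip]]]]]] [[_ [_ [_ [HT _]]]] _]] HKR Hlam [G HG].
  pose proof HKR as (_ & _ & _ & _ & [x0 Hx0] & _).
  assert (HGcont : continuous_C opn G).
  { apply (unif_limit_continuous opn (fun n x => Cpow lam (return_time T Cn B n x)));
      [|exact HG].
    intros n. apply locally_constant_continuous. intros x.
    destruct (return_time_locally_constant HKR n x HT) as [U [HU [Ux HUr]]].
    exists U. split; [exact HU | split; [exact Ux |]].
    intros y Uy. rewrite (HUr y Uy). reflexivity. }
  assert (HGunit : forall x, Cnorm (G x) = 1).
  { apply (unif_limit_unit_norm (fun n x => Cpow lam (return_time T Cn B n x))); auto.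
    intros n x. rewrite Cnorm_Cpow, Hlam. apply pow1. }
  set (f := fun x => Complex.Cconj (G x)).
  assert (Hfcont : continuous_C opn f) by (apply continuous_C_conj; auto).
  assert (Hoff : forall x, x <> x0 -> f (T x) = Cmult lam (f x)).
  { intros x Hx. unfold f.
    rewrite (return_limit_shift HKR lam G x Hlam HG) by (intros Hall; apply Hx, Hx0, Hall).
    symmetry. rewrite <- Cconj_unit_mult by auto. reflexivity. }
  exists f. repeat split; auto.
  - exists xa. intros Hzero.
    assert (Cnorm (f xa) = 1) by (unfold f; rewrite Cnorm_Cmod, Complex.Cmod_conj,
                                    <- Cnorm_Cmod; auto).
    rewrite Hzero, Cnorm_C0 in H. lra.
  - intros x. destruct (classic (x = x0)) as [->|Hx]; [|auto].
    apply (continuous_eq_off_point opn (fun y => f (T y)) (fun y => Cmult lam (f y)));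
      auto using continuous_C_comp, continuous_C_scale.
Qed.

Theorem mainTheorem8 (X : Type) (opn : (X -> Prop) -> Prop) (T : X -> X)
    (Cn : nat -> nat) (h : nat -> nat -> nat) (B : nat -> nat -> X -> Prop) (alpha : R) :
  minimal_cantor_system opn T ->
  CKR_partitions opn T Cn h B ->
  (continuous_eigenvalue opn T (expi2pi alpha) <->
     unif_conv_C (fun n x => Cpow (expi2pi alpha) (return_time T Cn B n x))) /\
  (continuous_eigenvalue opn T (expi2pi alpha) <->
     unif_conv_modZ (fun n x => alpha * INR (return_time T Cn B n x))).
Proof.
  intros Hsys HKR.
  pose proof (Cnorm_expi alpha) as Hunit.
  assert (Heig : continuous_eigenvalue opn T (expi2pi alpha) <->
     unif_conv_C (fun n x => Cpow (expi2pi alpha) (return_time T Cn B n x))).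
  { split.
    - apply (eigenvalue_return_times_converge opn T Cn h B); auto.
    - apply (return_times_converge_eigenvalue opn T Cn h B); auto. }
  split; [exact Heig|].
  rewrite Heig, modZ_iff_C.
  replace (fun n x => expi2pi (alpha * INR (return_time T Cn B n x)))
    with (fun n x => Cpow (expi2pi alpha) (return_time T Cn B n x)); [tauto|].
  do 2 (apply functional_extensionality; intro). apply Cpow_expi.
Qed.
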